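(* Let $R$ be an associative ring with identity and involution $*$, and let $a\in R^{\#}\cap R^{\dagger}$. Then $a\in R^{SEP}$ if and only if $a(a^{\#})^*a^{\dagger}$ and $a^{\dagger}a^2$ are left $a^{\dagger}aa^{\#}$-equivalent, i.e. $a^{\dagger}aa^{\#}\,a(a^{\#})^*a^{\dagger}=a^{\dagger}aa^{\#}\,a^{\dagger}a^2$.
   Context: An involution on $R$ is a map $x\mapsto x^*$ with $(x^* )^*=x$, $(x+y)^*=x^*+y^*$, $(xy)^*=y^*x^*$. An element $a$ is Moore–Penrose invertible if there is $b$ with $aba=a$, $bab=b$, $(ab)^*=ab$, $(ba)^*=ba$; such $b$ is unique, denoted $a^{\dagger}$, and $R^{\dagger}$ is the set of such $a$. An element $a$ is group invertible if there is $b$ with $aba=a$, $bab=b$, $ab=ba$; such $b$ is unique, denoted $a^{\#}$, and $R^{\#}$ is the set of such $a$. For $a\in R^{\#}\cap R^{\dagger}$, $a$ is SEP if $a^*=a^{\dagger}=a^{\#}$; $R^{SEP}$ denotes the set of SEP elements. For $x,b,c\in R$, $b$ and $c$ are left $x$-equivalent if $xb=xc$. *)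

From mathcomp Require Import all_boot all_algebra.
Set Implicit Arguments. Unset Strict Implicit. Unset Printing Implicit Defensive.
Import GRing.Theory.
Local Open Scope ring_scope.

Definition involution (R : pzRingType) (star : R -> R) : Prop :=
  [/\ forall x, star (star x) = x,
      forall x y, star (x + y) = star x + star y &
      forall x y, star (x * y) = star y * star x].

Definition is_MP_inverse (R : pzRingType) (star : R -> R) (a b : R) : Prop :=
  [/\ a * b * a = a, b * a * b = b, star (a * b) = a * b & star (b * a) = b * a].

Definition is_group_inverse (R : pzRingType) (a b : R) : Prop :=
  [/\ a * b * a = a, b * a * b = b & a * b = b * a].

Definition MP_invertible (R : pzRingType) (star : R -> R) (a : R) : Prop :=
  exists b, is_MP_inverse star a b.
Definition group_invertible (R : pzRingType) (a : R) : Prop :=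
  exists b, is_group_inverse a b.

Definition SEP (R : pzRingType) (star : R -> R) (a : R) : Prop :=
  exists b c, [/\ is_group_inverse a b, is_MP_inverse star a c,
                  star a = c & c = b].

Definition left_equiv (R : pzRingType) (x b c : R) : Prop := x * b = x * c.

From mathcomp Require Import all_boot all_algebra.
Set Implicit Arguments. Unset Strict Implicit. Unset Printing Implicit Defensive.
Import GRing.Theory.
Local Open Scope ring_scope.

(** Write [g] for the group inverse and [m] for the Moore-Penrose inverse
    of [a].  Since [m a a^* = a^*], the condition reads [g^* m = m a g m a^2].
    Multiplying it on the right by [a g] and taking adjoints gives
    [m^* g = g^* m], whence [m a g = a^* g^* m = m]; this alone forces
    [a m = a g] and then [m a = g a], i.e. [m = g].  With [m = g] the
    condition becomes [g^* g = g a], and then [a^* = a^* a g = a^* g^* g = g]. *)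

Lemma group_inv_uniq (R : pzRingType) (a b c : R) :
  is_group_inverse a b -> is_group_inverse a c -> b = c.
Proof.
move=> [b1 b2 b3] [c1 c2 c3].
have bba : b * b * a = b by rewrite -mulrA -b3 mulrA b2.
have acc : a * c * c = c by rewrite c3 c2.
have bac_b : b * a * c = b.
  by rewrite -[in RHS]bba -[in RHS]c1 !mulrA -(mulrA _ c a) -c3 mulrA bba.
have bac_c : b * a * c = c.
  by rewrite -acc !mulrA -b3 b1 acc.
by rewrite -bac_b bac_c.
Qed.

Lemma MP_inv_uniq (R : pzRingType) (star : R -> R) (a b c : R) :
  involution star -> is_MP_inverse star a b -> is_MP_inverse star a c -> b = c.
Proof.
move=> [_ _ sM] [b1 b2 b3 b4] [c1 c2 c3 c4].
have bac_b : b * a * c = b.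
  transitivity (b * star (a * b) * star (a * c)); first by rewrite b3 c3 !mulrA b2.
  by rewrite -mulrA -sM !mulrA c1 b3 mulrA b2.
have bac_c : b * a * c = c.
  transitivity (star (b * a) * star (c * a) * c).
    by rewrite b4 c4 -(mulrA _ (c * a) c) c2.
  by rewrite -sM -(mulrA c a (b * a)) (mulrA a b a) b1 c4 c2.
by rewrite -bac_b bac_c.
Qed.

Section GroupAndMPInverse.

Variables (R : pzRingType) (star : R -> R) (a g m : R).
Hypothesis star_inv : involution star.
Hypothesis g_group_inv : is_group_inverse a g.
Hypothesis m_MP_inv : is_MP_inverse star a m.

Let starK : forall x, star (star x) = x. Proof. by case: star_inv. Qed.
Let starM : forall x y, star (x * y) = star y * star x.
Proof. by case: star_inv. Qed.
Let aga : a * g * a = a. Proof. by case: g_group_inv. Qed.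
Let gag : g * a * g = g. Proof. by case: g_group_inv. Qed.
Let ag_ga : a * g = g * a. Proof. by case: g_group_inv. Qed.
Let ama : a * m * a = a. Proof. by case: m_MP_inv. Qed.
Let mam : m * a * m = m. Proof. by case: m_MP_inv. Qed.
Let star_am : star (a * m) = a * m. Proof. by case: m_MP_inv. Qed.
Let star_ma : star (m * a) = m * a. Proof. by case: m_MP_inv. Qed.

Lemma group_inv_mulKr : a * a * g = a.
Proof. by rewrite -mulrA ag_ga mulrA aga. Qed.

Lemma group_inv_sqK : g * g * a = g.
Proof. by rewrite -mulrA -ag_ga mulrA gag. Qed.

Lemma MP_inv_star_absorb : star a * a * m = star a.
Proof. by rewrite -mulrA -star_am -starM ama. Qed.

Lemma MP_inv_star_group_inv : m * a * star g = star g.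
Proof.
have sg : star g = star a * star g * star g.
  by rewrite -{1}group_inv_sqK !starM mulrA.
have mas : m * a * star a = star a by rewrite -star_ma -starM mulrA ama.
by rewrite {1}sg !mulrA mas -sg.
Qed.

Lemma left_equivE :
  left_equiv (m * a * g) (a * star g * m) (m * a ^+ 2) <->
  star g * m = m * a * g * m * a * a.
Proof.
rewrite /left_equiv.
have -> : m * a * g * (a * star g * m) = star g * m.
  by rewrite !mulrA -(mulrA m a g) -(mulrA m) aga MP_inv_star_group_inv.
by rewrite expr2 !mulrA.
Qed.

Lemma MP_eq_group_inv : m * a * g = m -> m = g.
Proof.
move=> mag.
have am_ag : a * m = a * g by rewrite -{1}mag !mulrA ama.
have star_a : star a = g * a * star a.
  by rewrite -{1}aga -mulrA starM -ag_ga -am_ag star_am am_ag ag_ga.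
have ma_ga : m * a = g * a.
  rewrite -star_ma starM {1}star_a -!mulrA -starM star_ma.
  by rewrite [a * _]mulrA ama.
by rewrite -gag -ma_ga mag.
Qed.

Lemma MP_inv_mul_group_inv : star g * m = m * a * g * m * a * a -> m * a * g = m.
Proof.
move=> cond.
have absorb : star g * m * a * g = star g * m.
  by rewrite cond -!mulrA [a * (a * g)]mulrA group_inv_mulKr.
have star_m_g : star m * g = star g * m.
  have := congr1 star absorb.
  by rewrite !starM starK [star a * _]mulrA -starM star_ma !mulrA absorb => <-.
have mag : m * a * g = star a * star g * m.
  by rewrite -[RHS]mulrA -star_m_g mulrA -starM star_ma.
by rewrite {1}mag -{1}mam !mulrA -mag -(mulrA m a g) -(mulrA m) aga mam.
Qed.

Lemma star_eq_group_inv : m = g -> star g * g = g * a -> star a = g.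
Proof.
move=> mg gg.
have am_ag : a * m = a * g by rewrite mg.
by rewrite -MP_inv_star_absorb -mulrA am_ag ag_ga -gg mulrA -starM
  -ag_ga -am_ag star_am am_ag ag_ga gag.
Qed.

Lemma SEPE : SEP star a <-> star a = m /\ m = g.
Proof.
split=> [[b [c [b_inv c_inv sa cb]]] | [sa mg]].
  by rewrite (MP_inv_uniq star_inv m_MP_inv c_inv) (group_inv_uniq g_group_inv b_inv).
by exists g, m.
Qed.

End GroupAndMPInverse.

Theorem theorem5p4 (R : pzRingType) (star : R -> R) (a ag am : R) :
  involution star ->
  is_group_inverse a ag ->       (* ag = a^# *)
  is_MP_inverse star a am ->     (* am = a^† *)
  (SEP star a <->
   left_equiv (am * a * ag) (a * star ag * am) (am * a ^+ 2)).
Proof.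
move=> star_inv g_inv m_inv.
have [starK _ _] := star_inv; have [_ gag ag_ga] := g_inv.
have SEP_E := SEPE star_inv g_inv m_inv.
have cond_E := left_equivE star_inv g_inv m_inv.
split=> [/SEP_E[sa mg] | /cond_E cond]; [apply/cond_E | apply/SEP_E].
  by rewrite -mg -sa starK sa mg gag (group_inv_sqK g_inv) ag_ga.
have mg := MP_eq_group_inv star_inv g_inv m_inv
  (MP_inv_mul_group_inv star_inv g_inv m_inv cond).
split=> //; rewrite mg; apply: (star_eq_group_inv star_inv g_inv m_inv mg).
by rewrite -[X in _ * X]mg cond mg gag (group_inv_sqK g_inv).
Qed.
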